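(* Let $k,c,\epsilon>0$ be constants and let $p=\frac{1+\epsilon}{d}$. Then with high probability every subset $X\subseteq V(Q^d)$ of size $|X|\ge c\, n d^{-k}$ satisfies $|\partial_{e,p}(X)|\le |X|\log d$.
   Context: $Q^d$ denotes the $d$-dimensional hypercube: vertex set $\{0,1\}^d$, two vertices adjacent iff they differ in exactly one coordinate; $n:=2^d$. $Q^d_p$ denotes the random subgraph of $Q^d$ on the same vertex set obtained by retaining each edge of $Q^d$ independently with probability $p$. For $X\subseteq V(Q^d)$, $\partial_{e,p}(X)$ is the set of edges of $Q^d_p$ with one endpoint in $X$ and the other in $V(Q^d)\setminus X$. ''With high probability'' means with probability tending to one as $d\to\infty$. *)

From HB Require Import structures.
From mathcomp Require Import all_boot all_order all_algebra.
From mathcomp Require Import all_classical all_reals all_analysis.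
Set Implicit Arguments. Unset Strict Implicit. Unset Printing Implicit Defensive.
Import Order.TTheory GRing.Theory Num.Theory.
Local Open Scope ring_scope.

Definition vert (d : nat) := {ffun 'I_d -> bool}.

Definition flip (d : nat) (x : vert d) (i : 'I_d) : vert d :=
  [ffun j => if j == i then ~~ x j else x j].

(* An edge of Q^d is encoded as a pair (x, i) with x i = false: it joins
   x and flip x i. Every edge of Q^d has exactly one such encoding. *)
Definition cube_edges (d : nat) : {set vert d * 'I_d} :=
  [set e : vert d * 'I_d | ~~ e.1 e.2].

Definition edge_boundary (d : nat) (S : {set vert d * 'I_d}) (X : {set vert d})
  : {set vert d * 'I_d} :=
  [set e in S | ((e : vert d * 'I_d).1 \in X) != (flip e.1 e.2 \in X)].

(* Probability that the random subgraph Q^d_p (each edge kept independently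
   with probability p) has edge set satisfying P. *)
Definition subgraph_prob (R : realType) (d : nat) (p : R)
  (P : {set vert d * 'I_d} -> bool) : R :=
  \sum_(S : {set vert d * 'I_d} | (S \subset cube_edges d) && P S)
     p ^+ #|S| * (1 - p) ^+ (#|cube_edges d| - #|S|).

(* Every boundary edge of X has an endpoint in X, so |∂X| is at most the sum of
   the degrees over X.  With J = ⌊(ln d)/2⌋ and D ≤ J + J·C(D, J), this gives
   |∂X| ≤ |X|·J + J·Y, where Y = Σ_v C(deg v, J) counts the J-stars of Q^d_p.
   Hence every X of size at least m = c n d^(-k) has |∂X| ≤ |X| ln d as soon as
   J·Y ≤ m (ln d)/2.  Since E[Y] ≤ n C(d, J) p^J ≤ n (1+ε)^J / J!, Markov's
   inequality bounds the failure probability by (2 d^k / (c ln d))·(2(1+ε))^J/J!;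
   as d^k ≤ e^(2k(J+1)), this is O(B^J / J!) for a constant B, and J → ∞. *)

From HB Require Import structures.
From mathcomp Require Import all_boot all_order all_algebra.
From mathcomp Require Import all_classical all_reals all_analysis.
Import Order.TTheory GRing.Theory Num.Theory.
Import numFieldNormedType.Exports.
From mathcomp Require Import ring lra.

Set Implicit Arguments.
Unset Strict Implicit.
Unset Printing Implicit Defensive.

Local Open Scope classical_set_scope.

Lemma leq_bin_linear D J : 0 < J -> D <= J + J * 'C(D, J).
Proof.
case: J => // J _; case: (ltnP D J.+1) => [/ltnW DJ | JD].
  exact: leq_trans DJ (leq_addr _ _).
apply: leq_trans _ (leq_addl _ _); rewrite -mul_bin_diag; apply: leq_pmulr.
by rewrite bin_gt0 -ltnS (ltn_predK JD).
Qed.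

Lemma leq_bin_fact_exp n m : 'C(n, m) * m`! <= n ^ m.
Proof.
rewrite bin_ffact ffact_prod -[m in n ^ m]card_ord -prod_nat_const.
by apply: leq_prod => i _; apply: leq_subr.
Qed.

Section Hypercube.
Variable d : nat.
Implicit Types (x v : vert d) (i : 'I_d) (S : {set vert d * 'I_d}) (X : {set vert d}).

Lemma flipK x i : flip (flip x i) i = x.
Proof. by apply/ffunP=> j; rewrite !ffunE; case: (j == i); rewrite ?negbK. Qed.

Lemma flip_at x i : flip x i i = ~~ x i.
Proof. by rewrite ffunE eqxx. Qed.

Lemma card_vert : #|vert d| = 2 ^ d.
Proof. by rewrite card_ffun card_bool card_ord. Qed.

Definition incident v : {set vert d * 'I_d} :=
  [set e | (e.1 == v) || (flip e.1 e.2 == v)].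

Lemma incident_cube_edge_fst v e : e \in incident v :&: cube_edges d ->
  e.1 = if v e.2 then flip v e.2 else v.
Proof.
case: e => x i; rewrite !inE /= => /andP[/orP[] /eqP <- xi].
  by rewrite (negbTE xi).
by rewrite flip_at xi flipK.
Qed.

Lemma card_incident_cube_edges v : #|incident v :&: cube_edges d| <= d.
Proof.
rewrite -(@card_in_imset _ _ snd) => [|[x1 i1] [x2 i2] /incident_cube_edge_fst h1].
  by rewrite -[d in _ <= d]card_ord max_card.
by move=> /incident_cube_edge_fst h2 /= i12; move: h1 h2; rewrite /= i12 => -> ->.
Qed.

Lemma card_edge_boundary_le S X :
  #|edge_boundary S X| <= \sum_(v in X) #|S :&: incident v|.
Proof.
apply: leq_trans (unstable.card_big_setU _ _ _); apply: subset_leq_card.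
apply/fintype.subsetP => -[x i]; rewrite !inE /= => /andP[xiS cut].
apply/finset.bigcupP; case xX: (x \in X); first by exists x; rewrite // !inE xiS eqxx.
by exists (flip x i); [move: cut; rewrite xX; case: (_ \in X) |
                      rewrite !inE xiS eqxx orbT].
Qed.

Definition star_count S J := \sum_v 'C(#|S :&: incident v|, J).

Lemma card_edge_boundary_le_star_count S X J : 0 < J ->
  #|edge_boundary S X| <= #|X| * J + J * star_count S J.
Proof.
move=> J_gt0; apply: leq_trans (card_edge_boundary_le S X) _.
apply: (@leq_trans (\sum_(v in X) (J + J * 'C(#|S :&: incident v|, J)))).
  by apply: leq_sum => v _; apply: leq_bin_linear.
rewrite big_split /= sum_nat_const leq_add2l -big_distrr leq_mul2l /=.
by rewrite [X in _ <= X](bigID (mem X)) leq_addr orbT.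
Qed.

End Hypercube.

Local Open Scope ring_scope.

Section RandomSubset.
Variables (R : realType) (p : R) (T : finType).
Implicit Types (A B S U : {set T}).

Definition subset_weight A S : R := p ^+ #|S| * (1 - p) ^+ (#|A| - #|S|).

Lemma sum_subset_weight A : \sum_(S : {set T} | S \subset A) subset_weight A S = 1.
Proof.
rewrite -[RHS](expr1n _ #|A|) -[1 in RHS](subrK p) exprDn.
rewrite (partition_big (fun S => inord #|S| : 'I_#|A|.+1) xpredT) //=.
apply: eq_bigr => j _.
rewrite (eq_bigl (fun S => S \in [set S : {set T} | S \subset A & #|S| == j]))
  => [|S]; last first.
  rewrite !inE; case: (boolP (S \subset A)) => //= /subset_leq_card SA.
  by rewrite -val_eqE /= inordK.
rewrite (eq_bigr (fun _ => p ^+ j * (1 - p) ^+ (#|A| - j))) => [|S].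
  by rewrite sumr_const cards_draws mulrC.
by rewrite inE => /andP[_ /eqP <-].
Qed.

Lemma sum_subset_weight_supsets A B : B \subset A ->
  \sum_(S : {set T} | (S \subset A) && (B \subset S)) subset_weight A S = p ^+ #|B|.
Proof.
move=> BA; rewrite (reindex_onto (fun U => U :|: B) (fun S => S :\: B)); last first.
  by move=> S /andP[_ BS]; rewrite finset.setUC -{1}(finset.setIidPr BS) finset.setID.
rewrite (eq_bigl (fun U => U \subset A :\: B)) => [|U]; last first.
  rewrite finset.setDUl finset.setDv finset.setU0 finset.subUset BA finset.subsetUr.
  by rewrite !andbT finset.subsetD (sameP eqP finset.setDidPl).
rewrite -[RHS]mulr1 -(sum_subset_weight (A :\: B)) big_distrr /=.
apply: eq_bigr => U; rewrite finset.subsetD => /andP[_ UB].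
rewrite /subset_weight cardsU (disjoint_setI0 UB) cards0 subn0.
rewrite cardsD (finset.setIidPr BA).
by rewrite addnC subnDA exprD mulrA.
Qed.

Lemma sum_subset_weight_bin A B J :
  \sum_(S : {set T} | S \subset A) subset_weight A S * 'C(#|S :&: B|, J)%:R
    = 'C(#|B :&: A|, J)%:R * p ^+ J.
Proof.
pose D := [set U : {set T} | U \subset B :&: A & #|U| == J].
have binE S : S \subset A -> 'C(#|S :&: B|, J) = #|[set U in D | U \subset S]|.
  move=> SA; rewrite -cards_draws; apply: eq_card => U; rewrite !inE !finset.subsetI.
  case: (boolP (U \subset S)) => [/fintype.subset_trans/(_ SA)->|]; last by rewrite andbF.
  by rewrite !andbT.
transitivity (\sum_(S : {set T} | S \subset A)
                \sum_(U | (U \in D) && (U \subset S)) subset_weight A S).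
  apply: eq_bigr => S SA; rewrite binE // -sum1dep_card natr_sum big_distrr /=.
  by apply: eq_bigr => U _; rewrite mulr1.
rewrite (exchange_big_dep (mem D)) /=; last by move=> S U _ /andP[].
rewrite -cards_draws -/D -sum1_card natr_sum big_distrl /=.
apply: eq_bigr => U; rewrite inE mul1r => /andP[UBA /eqP <-].
rewrite -(@sum_subset_weight_supsets A U); last first.
  exact: fintype.subset_trans UBA (finset.subsetIr _ _).
by apply: eq_bigl => S; rewrite UBA eqxx.
Qed.

Hypotheses (p_ge0 : 0 <= p) (p_le1 : p <= 1).

Lemma subset_weight_ge0 A S : 0 <= subset_weight A S.
Proof. by rewrite mulr_ge0 ?exprn_ge0 ?subr_ge0. Qed.

Lemma sum_subset_weight_le1 A (P : pred {set T}) :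
  \sum_(S : {set T} | (S \subset A) && P S) subset_weight A S <= 1.
Proof.
rewrite -(sum_subset_weight A) [leRHS](bigID P) /= lerDl.
by apply: sumr_ge0 => S _; apply: subset_weight_ge0.
Qed.

Lemma markov_subset_weight A (P : pred {set T}) (Y : {set T} -> R) a :
  0 < a -> (forall S, 0 <= Y S) -> (forall S, S \subset A -> Y S <= a -> P S) ->
  1 - (\sum_(S : {set T} | S \subset A) subset_weight A S * Y S) / a
    <= \sum_(S : {set T} | (S \subset A) && P S) subset_weight A S.
Proof.
move=> a_gt0 Y_ge0 YP.
rewrite -[X in X - _](sum_subset_weight A) mulr_suml -sumrB big_mkcondr /=.
apply: ler_sum => S SA; rewrite -mulrA -[X in X - _]mulr1 -mulrBr.
case: ifP => PS.
  by rewrite ler_piMr ?subset_weight_ge0 // lerBlDr lerDl divr_ge0 // ltW.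
rewrite mulr_ge0_le0 ?subset_weight_ge0 // subr_le0 ler_pdivlMr // mul1r ltW //.
by rewrite ltNge; apply: contraFN PS => /(YP S SA).
Qed.

End RandomSubset.

Lemma subgraph_probE (R : realType) d (p : R) (P : pred {set vert d * 'I_d}) :
  subgraph_prob p P
    = \sum_(S : {set vert d * 'I_d} | (S \subset cube_edges d) && P S)
        subset_weight p (cube_edges d) S.
Proof. by []. Qed.

Lemma bin_mul_expr_div_le (R : realFieldType) n J (x : R) :
  0 <= x -> (0 < n)%N ->
  'C(n, J)%:R * (x / n%:R) ^+ J <= x ^+ J / J`!%:R.
Proof.
move=> x_ge0 n_gt0.
have fact_neq0 : J`!%:R != 0 :> R by rewrite pnatr_eq0 -lt0n fact_gt0.
have -> : 'C(n, J)%:R * (x / n%:R) ^+ J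
    = ('C(n, J) * J`!)%:R / (n ^ J)%:R * (x ^+ J / J`!%:R) :> R.
  rewrite natrM natrX expr_div_n; field.
  by rewrite fact_neq0 expf_neq0 ?pnatr_eq0 -?lt0n.
rewrite ler_piMl ?divr_ge0 ?exprn_ge0 // ler_pdivrMr ?ltr0n ?expn_gt0 ?n_gt0 //.
by rewrite mul1r ler_nat leq_bin_fact_exp.
Qed.

Section FirstMoment.
Variables (R : realType) (d : nat).
Local Notation E := (cube_edges d).

Lemma sum_subset_weight_star_count_le (p : R) J : 0 <= p ->
  \sum_(S : {set vert d * 'I_d} | S \subset E)
      subset_weight p E S * (star_count S J)%:R
    <= (2 ^ d)%:R * ('C(d, J)%:R * p ^+ J).
Proof.
move=> p_ge0; under eq_bigr do rewrite natr_sum big_distrr /=.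
rewrite exchange_big /= mulr_natl -card_vert -sumr_const; apply: ler_sum => v _.
rewrite sum_subset_weight_bin ler_wpM2r ?exprn_ge0 // ler_nat.
by rewrite leq_bin2l // card_incident_cube_edges.
Qed.

Lemma sum_subset_weight_scaled_star_count_le (x : R) J : 0 <= x -> (0 < d)%N ->
  \sum_(S : {set vert d * 'I_d} | S \subset E)
      subset_weight (x / d%:R) E S * (J * star_count S J)%:R
    <= (2 ^ d)%:R * ((2 * x) ^+ J / J`!%:R).
Proof.
move=> x_ge0 d_gt0.
under eq_bigr do rewrite natrM mulrCA.
rewrite -big_distrr /=.
apply: le_trans (ler_wpM2l (ler0n _ J) (sum_subset_weight_star_count_le _ _)) _.
  by rewrite divr_ge0.
rewrite mulrCA ler_wpM2l // [(2 * x) ^+ J]exprMn.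
apply: le_trans (ler_wpM2l (ler0n _ J) (bin_mul_expr_div_le J x_ge0 d_gt0)) _.
rewrite mulrA ler_wpM2r ?invr_ge0 ?ler0n // ler_wpM2r ?exprn_ge0 //.
by rewrite -natrX ler_nat ltnW // ltn_expl.
Qed.

End FirstMoment.

Lemma powR_le_expR (R : realType) (x y k : R) : 0 <= k -> 0 < x -> ln x <= y ->
  x `^ k <= expR (k * y).
Proof. by move=> k_ge0 x_gt0 xy; rewrite /powR gt_eqF // ler_expR ler_wpM2l. Qed.

Definition trunc_half_ln (R : realType) (d : nat) : nat :=
  Num.truncn (ln (d%:R : R) / 2).

Section LargeSetsSmallBoundary.
Variables (R : realType) (k c eps : R).
Hypotheses (k_gt0 : 0 < k) (c_gt0 : 0 < c) (eps_gt0 : 0 < eps).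

Definition small_boundary d (S : {set vert d * 'I_d}) : bool :=
  [forall X : {set vert d},
     (c * (2 ^ d)%:R * (d%:R `^ (- k)) <= #|X|%:R) ==>
     ((#|edge_boundary S X|)%:R <= #|X|%:R * ln (d%:R : R))].

Lemma small_boundary_of_star_count d (S : {set vert d * 'I_d}) J :
  (0 < J)%N -> J%:R <= ln (d%:R : R) / 2 ->
  (J * star_count S J)%:R <= c * (2 ^ d)%:R * d%:R `^ (- k) * ln (d%:R : R) / 2 ->
  small_boundary S.
Proof.
move=> J_gt0 JL small_count; apply/forallP => X; apply/implyP => X_large.
set L := ln _ in JL small_count *; set m := c * _ * _ in small_count X_large.
have L_ge0 : 0 <= L / 2 by apply: le_trans JL.
apply: le_trans (_ : (#|X| * J + J * star_count S J)%:R <= _).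
  by rewrite ler_nat card_edge_boundary_le_star_count.
have XJ : #|X|%:R * J%:R <= #|X|%:R * (L / 2) by rewrite ler_wpM2l.
have mX : m * (L / 2) <= #|X|%:R * (L / 2) by rewrite ler_wpM2r.
rewrite natrD natrM; rewrite -mulrA in small_count; lra.
Qed.

Definition fail_bound (J : nat) : R :=
  2 * expR (2 * k) / c * exp_coeff (2 * (1 + eps) * expR (2 * k)) J.

Lemma fail_bound_ge (N x : R) J :
  0 <= N -> 0 < x -> 1 <= ln x -> ln x <= 2 * J.+1%:R ->
  N * ((2 * (1 + eps)) ^+ J / J`!%:R) <= fail_bound J * (c * N * x `^ (- k) * ln x / 2).
Proof.
move=> N_ge0 x_gt0 L_ge1 L_le.
have xk_le : x `^ k <= expR (2 * k) ^+ J.+1.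
  by rewrite -expRM_natr (mulrC 2 k) -mulrA; apply: powR_le_expR => //; apply: ltW.
have xk_gt0 : 0 < x `^ k by apply: powR_gt0.
have fact_neq0 : J`!%:R != 0 :> R by rewrite pnatr_eq0 -lt0n fact_gt0.
have -> : fail_bound J * (c * N * x `^ (- k) * ln x / 2)
    = N * ((2 * (1 + eps)) ^+ J / J`!%:R) * (expR (2 * k) ^+ J.+1 / x `^ k * ln x).
  rewrite /fail_bound exp_coeffE powRN /= !exprMn exprS.
  by field; rewrite fact_neq0 !gt_eqF.
have base_ge0 : 0 <= 2 * (1 + eps) by rewrite mulr_ge0 // addr_ge0 // ltW.
rewrite ler_peMr ?mulr_ge0 ?divr_ge0 ?exprn_ge0 //.
by apply: mulr_ege1 => //; rewrite ler_pdivlMr // mul1r.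
Qed.

Lemma subgraph_prob_small_boundary_bounds d :
  1 + eps <= d%:R -> 2 <= ln (d%:R : R) ->
  1 - fail_bound (trunc_half_ln R d)
    <= subgraph_prob ((1 + eps) / d%:R) (@small_boundary d) <= 1.
Proof.
move=> d_ge L_ge2; set L := ln _ in L_ge2 *; set p := (1 + eps) / d%:R.
have eps1_gt0 : 0 < 1 + eps by rewrite addr_gt0.
have d_gt0 : (0 < d)%N by rewrite -(ltr0n R) (lt_le_trans eps1_gt0).
have p_ge0 : 0 <= p by rewrite divr_ge0 ?ler0n ?ltW.
have p_le1 : p <= 1 by rewrite ler_pdivrMr ?ltr0n // mul1r.
have JL : (trunc_half_ln R d)%:R <= L / 2 by rewrite truncn_le -/L; lra.
have LJ : L / 2 < (trunc_half_ln R d).+1%:R by rewrite -truncn_le_nat.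
set J := trunc_half_ln R d in JL LJ *.
have J_gt0 : (0 < J)%N by rewrite lt0n; apply/eqP => J0; move: LJ; rewrite J0; lra.
rewrite subgraph_probE sum_subset_weight_le1 // andbT.
set a := c * (2 ^ d)%:R * d%:R `^ (- k) * L / 2.
have a_gt0 : 0 < a.
  by rewrite !(mulr_gt0, divr_gt0, powR_gt0) ?ltr0n ?expn_gt0 //; lra.
have star_count_small (S : {set vert d * 'I_d}) : S \subset cube_edges d ->
    (J * star_count S J)%:R <= a -> small_boundary S.
  by move=> _; apply: small_boundary_of_star_count.
apply: le_trans
  (markov_subset_weight p_ge0 p_le1 a_gt0 (fun S => ler0n _ _) star_count_small).
rewrite lerD2l lerN2 ler_pdivrMr //.
apply: le_trans (sum_subset_weight_scaled_star_count_le J _ d_gt0)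
                (fail_bound_ge _ _ _ _) => //.
- exact: ltW.
- by rewrite ltr0n.
- by rewrite -/L; lra.
- by rewrite -/L; lra.
Qed.

End LargeSetsSmallBoundary.

Lemma ln_natr_ge_near (R : realType) (y : R) :
  \forall d \near \oo, y <= ln (d%:R : R).
Proof.
near=> d; have d_ge : expR y <= d%:R by near: d; apply: nbhs_infty_ger.
by rewrite -ler_expR lnK // posrE (lt_le_trans (expR_gt0 y)).
Unshelve. all: by end_near. Qed.

Lemma trunc_half_ln_cvgy (R : realType) : trunc_half_ln R @ \oo --> \oo.
Proof.
apply/cvgnyPge => N; near=> d.
have L_ge : N%:R * 2 <= ln (d%:R : R) by near: d; apply: ln_natr_ge_near.
have L_ge0 : 0 <= ln (d%:R : R) by apply: le_trans L_ge; rewrite mulr_ge0.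
by rewrite /trunc_half_ln truncn_ge_nat ?ler_pdivlMr ?mul0r.
Unshelve. all: by end_near. Qed.

Theorem lemma2p5 (R : realType) (k c eps : R) :
  0 < k -> 0 < c -> 0 < eps ->
  (fun d : nat =>
     subgraph_prob ((1 + eps) / d%:R)
       (fun S => [forall X : {set vert d},
          (c * (2 ^ d)%:R * (d%:R `^ (- k)) <= #|X|%:R) ==>
          ((#|edge_boundary S X|)%:R <= #|X|%:R * ln (d%:R : R))]))
  @ \oo --> (1 : R).
Proof.
move=> k_gt0 c_gt0 eps_gt0.
apply: (@squeeze_cvgr _ _ _ _
  (fun d => 1 - fail_bound k c eps (trunc_half_ln R d)) (fun=> 1)).
- near=> d; apply: subgraph_prob_small_boundary_bounds => //; near: d.
    exact: nbhs_infty_ger.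
  exact: ln_natr_ge_near.
- rewrite -[X in _ --> X]subr0; apply: cvgB; first exact: cvg_cst.
  rewrite -(mulr0 (2 * expR (2 * k) / c)); apply: cvgMl_tmp.
  exact: cvg_comp (trunc_half_ln_cvgy R) (cvg_exp_coeff _).
- exact: cvg_cst.
Unshelve. all: by end_near. Qed.
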